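(* Let $\{\mathcal{C}_1,\mathcal{C}_2,\mathcal{C}_3\}$ be an unextendible set of three pairwise disjoint maximal commuting classes of two-qubit Pauli operators ($d=4$). Then the nine operators in $\mathcal{C}_1\cup\mathcal{C}_2\cup\mathcal{C}_3$ can be partitioned into a different set of three maximal commuting classes $\{\mathcal{C}_1',\mathcal{C}_2',\mathcal{C}_3'\}$ such that each $\mathcal{C}_i'$ contains exactly one operator from each of $\mathcal{C}_1$, $\mathcal{C}_2$, and $\mathcal{C}_3$.
   Context: Two-qubit Pauli operators are the tensor products $P_1\otimes P_2$ with $P_k\in\{I,X,Y,Z\}$; products are taken up to a phase. A maximal commuting class in $d=4$ is a set of $3$ mutually commuting non-identity two-qubit Pauli operators. A set of pairwise disjoint maximal commuting classes $\{\mathcal{C}_1,\dots,\mathcal{C}_L\}$ is unextendible if no further maximal commuting class can be formed from the non-identity Pauli operators not in $\mathcal{C}_1\cup\dots\cup\mathcal{C}_L$. *)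

From mathcomp Require Import all_boot.
Set Implicit Arguments. Unset Strict Implicit. Unset Printing Implicit Defensive.

(* Single-qubit Pauli operators up to phase: 0 = I, 1 = X, 2 = Y, 3 = Z. *)
Definition pauli1 := 'I_4.
Definition pauli2 := (pauli1 * pauli1)%type.

Definition pauliI : pauli2 := (ord0, ord0).

Definition anticomm1 (a b : pauli1) : bool :=
  [&& a != ord0, b != ord0 & a != b].

(* Tensor products commute iff the number of anticommuting factors is even. *)
Definition commute2 (p q : pauli2) : bool :=
  anticomm1 p.1 q.1 == anticomm1 p.2 q.2.

Definition max_comm_class (C : {set pauli2}) : bool :=
  [&& #|C| == 3, pauliI \notin C &
      [forall p in C, forall q in C, commute2 p q]].

Definition unextendible (S : {set {set pauli2}}) : bool :=
  [&& [forall C in S, max_comm_class C],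
      trivIset S &
      ~~ [exists C : {set pauli2},
            max_comm_class C && [disjoint C & cover S]]].

From mathcomp Require Import all_boot.
Set Implicit Arguments. Unset Strict Implicit. Unset Printing Implicit Defensive.

(* The maximal commuting classes are the 15 lines of the generalized
   quadrangle of two-qubit Pauli operators. Three pairwise disjoint lines
   whose union meets every line form a regulus: they have exactly three common
   transversal lines, and these are pairwise disjoint. This is a finite check
   over the 15 lines. Counting then shows that three pairwise disjoint triples,
   each meeting each of three pairwise disjoint triples once, cover the same
   nine points. *)

Section SeqAsSet.
Variable T : finType.

Definition meets (s t : seq T) : bool := has (mem t) s.

Lemma disjoint_set_seq (s t : seq T) :
  [disjoint [set x in s] & [set x in t]] = ~~ meets s t.
Proof.
have Es : [set x in s] =i s by move=> x; rewrite inE.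
rewrite (eq_disjoint Es) disjoint_has; congr (~~ _).
by apply: eq_has => x; rewrite /= inE.
Qed.

Lemma card_setI_seq (s t : seq T) :
  uniq s -> #|[set x in s] :&: [set x in t]| = count (mem t) s.
Proof.
move=> us.
have -> : [set x in s] :&: [set x in t] = [set x in [seq x <- s | x \in t]].
  by apply/setP => x; rewrite !inE mem_filter andbC.
by rewrite cardsE (card_uniqP (filter_uniq _ us)) size_filter.
Qed.

Lemma set_cat (s t : seq T) : [set x in s ++ t] = [set x in s] :|: [set x in t].
Proof. by apply/setP => x; rewrite !inE mem_cat. Qed.

Lemma cover3 (A B C : {set T}) : cover [set A; B; C] = A :|: B :|: C.
Proof. by rewrite /cover !bigcup_setU !big_set1. Qed.

Lemma cardsU3 (A B C : {set T}) :
  [disjoint A & B] -> [disjoint A & C] -> [disjoint B & C] ->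
  #|A :|: B :|: C| = #|A| + #|B| + #|C|.
Proof.
move=> dAB dAC dBC.
by rewrite cardsU setIUl !disjoint_setI0 // setU0 cards0 subn0 cardsU
  disjoint_setI0 // cards0 subn0.
Qed.

End SeqAsSet.

Section Grid.
Variable T : finType.
Variables A1 A2 A3 B1 B2 B3 : {set T}.
Hypotheses (dA12 : [disjoint A1 & A2]) (dA13 : [disjoint A1 & A3])
  (dA23 : [disjoint A2 & A3]).
Hypotheses (dB12 : [disjoint B1 & B2]) (dB13 : [disjoint B1 & B3])
  (dB23 : [disjoint B2 & B3]).
Hypotheses (cA1 : #|A1| = 3) (cA2 : #|A2| = 3) (cA3 : #|A3| = 3).
Hypotheses (cB1 : #|B1| = 3) (cB2 : #|B2| = 3) (cB3 : #|B3| = 3).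
Hypothesis meet1 : forall B A, B \in [set B1; B2; B3] -> A \in [set A1; A2; A3] ->
  #|B :&: A| = 1.

Lemma grid_subset B : B \in [set B1; B2; B3] -> B \subset A1 :|: A2 :|: A3.
Proof.
move=> inB.
have cB : #|B| = 3 by move: inB; rewrite !inE -orbA => /or3P[] /eqP ->.
have dI (A A' : {set T}) : [disjoint A & A'] -> [disjoint B :&: A & B :&: A'].
  by apply: disjointW; apply: subsetIr.
have cBI : #|B :&: (A1 :|: A2 :|: A3)| = 3.
  by rewrite !setIUr cardsU3 ?dI // !meet1 // !inE eqxx ?orbT.
by apply/setIidPl/eqP; rewrite eqEcard subsetIl cBI cB.
Qed.

Lemma grid_cover : B1 :|: B2 :|: B3 = A1 :|: A2 :|: A3.
Proof.
apply/eqP; rewrite eqEcard !subUset !grid_subset ?inE ?eqxx ?orbT //=.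
by rewrite !cardsU3 // cA1 cA2 cA3 cB1 cB2 cB3.
Qed.

Lemma grid_neq : [set B1; B2; B3] != [set A1; A2; A3].
Proof.
apply/negP => /eqP E.
have inB1 : B1 \in [set B1; B2; B3] by rewrite !inE eqxx.
have inA : B1 \in [set A1; A2; A3] by rewrite -E.
by have := meet1 inB1 inA; rewrite setIid cB1.
Qed.

End Grid.

(* [ord_enum] does not reduce under [vm_compute] ([insub] goes through the
   opaque [idP]), hence this explicit enumeration. *)
Definition ord4 : seq 'I_4 :=
  [:: @Ordinal 4 0 isT; @Ordinal 4 1 isT; @Ordinal 4 2 isT; @Ordinal 4 3 isT].

Lemma mem_ord4 (i : 'I_4) : i \in ord4.
Proof. by rewrite -(mem_map val_inj) (_ : map val ord4 = iota 0 4) // mem_iota ltn_ord. Qed.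

Definition paulis : seq pauli2 := [seq (i, j) | i <- ord4, j <- ord4].

Lemma mem_paulis (p : pauli2) : p \in paulis.
Proof. by case: p => i j; apply: allpairs_f; apply: mem_ord4. Qed.

Definition triples : seq (seq pauli2) :=
  [seq a :: bc | a <- paulis, bc <- [seq [:: b; c] | b <- paulis, c <- paulis]].

Lemma mem_triples (s : seq pauli2) : size s = 3 -> s \in triples.
Proof.
case: s => [|a [|b [|c []]]] // _.
by apply: allpairs_f; [apply: mem_paulis | apply: allpairs_f; apply: mem_paulis].
Qed.

Definition class_seq (s : seq pauli2) : bool :=
  [&& uniq s, size s == 3, pauliI \notin s & all (fun p => all (commute2 p) s) s].

Lemma max_comm_class_seq (s : seq pauli2) :
  uniq s -> max_comm_class [set x in s] = class_seq s.
Proof.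
move=> us; rewrite /max_comm_class /class_seq us cardsE (card_uniqP us) inE /=.
congr (_ && (_ && _)); apply/forall_inP/allP => [comm p sp | comm p].
  have /comm/forall_inP commp : p \in [set x in s] by rewrite inE.
  by apply/allP => q sq; apply: commp; rewrite inE.
rewrite inE => /comm /allP commp; apply/forall_inP => q.
by rewrite inE => /commp.
Qed.

Definition pauli_rank (p : pauli2) : nat := 4 * p.1 + p.2.

(* Each class is listed once, as its increasing enumeration. *)
Definition lines : seq (seq pauli2) :=
  [seq s <- triples | class_seq s & sorted (fun p q => pauli_rank p < pauli_rank q) s].

Lemma lines_complete : all (fun s => class_seq s ==> has (perm_eq s) lines) triples.
Proof. by vm_compute. Qed.

Lemma line_uniq t : t \in lines -> uniq t.
Proof. by rewrite mem_filter => /andP[/andP[/and4P[]]]. Qed.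

Lemma line_max_comm_class t : t \in lines -> max_comm_class [set x in t].
Proof.
move=> tL; rewrite max_comm_class_seq ?line_uniq //.
by move: tL; rewrite mem_filter => /andP[/andP[]].
Qed.

Lemma max_comm_class_line (C : {set pauli2}) :
  max_comm_class C -> exists2 t, t \in lines & C = [set x in t].
Proof.
rewrite -(set_enum C) max_comm_class_seq ?enum_uniq // => cls.
case/and4P: (cls) => _ /eqP size3 _ _.
have /allP/(_ _ (mem_triples size3)) := lines_complete.
rewrite cls => /hasP[t tL pe].
by exists t => //; apply/setP => x; rewrite !inE (perm_mem pe).
Qed.

Definition transversals (ts : seq (seq pauli2)) : seq (seq pauli2) :=
  [seq s <- lines | all (fun t => count (mem t) s == 1) ts].

Definition blocking (u : seq pauli2) : bool := all (fun l => meets l u) lines.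

Lemma regulus_check :
  all (fun t1 => all (fun t2 => all (fun t3 =>
    [&& ~~ meets t1 t2, ~~ meets t1 t3, ~~ meets t2 t3 & blocking (t1 ++ t2 ++ t3)] ==>
    let ss := transversals [:: t1; t2; t3] in
    (size ss == 3) && pairwise (fun s s' => ~~ meets s s') ss) lines) lines) lines.
Proof. by vm_compute. Qed.

Lemma regulus t1 t2 t3 :
  t1 \in lines -> t2 \in lines -> t3 \in lines ->
  [disjoint [set x in t1] & [set x in t2]] -> [disjoint [set x in t1] & [set x in t3]] ->
  [disjoint [set x in t2] & [set x in t3]] -> blocking (t1 ++ t2 ++ t3) ->
  exists s1 s2 s3, [/\ [/\ s1 \in lines, s2 \in lines & s3 \in lines],
    [/\ [disjoint [set x in s1] & [set x in s2]], [disjoint [set x in s1] & [set x in s3]]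
       & [disjoint [set x in s2] & [set x in s3]]] &
    forall B A, B \in [set [set x in s1]; [set x in s2]; [set x in s3]] ->
      A \in [set [set x in t1]; [set x in t2]; [set x in t3]] -> #|B :&: A| = 1].
Proof.
rewrite !disjoint_set_seq => t1L t2L t3L d12 d13 d23 bl.
move/allP/(_ t1 t1L)/allP/(_ t2 t2L)/allP/(_ t3 t3L): regulus_check.
rewrite d12 d13 d23 bl /=.
case tr: (transversals _) => [|s1 [|s2 [|s3 []]]] //=.
case/and3P=> [/and3P[e12 e13 _] /andP[e23 _] _].
have sL s : s \in [:: s1; s2; s3] -> s \in lines by rewrite -tr mem_filter => /andP[].
have meet s t : s \in [:: s1; s2; s3] -> t \in [:: t1; t2; t3] ->
    #|[set x in s] :&: [set x in t]| = 1.
  rewrite -tr mem_filter => /andP[/allP cnt s_line] /cnt /eqP.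
  by rewrite card_setI_seq ?line_uniq.
exists s1, s2, s3; split.
- by split; apply: sL; rewrite !inE eqxx ?orbT.
- by rewrite !disjoint_set_seq e12 e13 e23.
- move=> B A; rewrite !inE -!orbA => /or3P[]/eqP-> /or3P[]/eqP->;
    by apply: meet; rewrite !inE eqxx ?orbT.
Qed.

Lemma card_line t : t \in lines -> #|[set x in t]| = 3.
Proof. by case/line_max_comm_class/and3P => /eqP. Qed.

Lemma unextendible_blocking (S : {set {set pauli2}}) t :
  unextendible S -> cover S = [set x in t] -> blocking t.
Proof.
case/and3P=> _ _ /existsPn noclass coverS; apply/allP => u uL.
have := noclass [set x in u]; rewrite line_max_comm_class // coverS.
by rewrite disjoint_set_seq negbK.
Qed.

Theorem theorem5 (C1 C2 C3 : {set pauli2}) :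
  [disjoint C1 & C2] -> [disjoint C1 & C3] -> [disjoint C2 & C3] ->
  unextendible [set C1; C2; C3] ->
  exists C1' C2' C3' : {set pauli2},
    (max_comm_class C1' /\ max_comm_class C2' /\ max_comm_class C3') /\
    ([disjoint C1' & C2'] /\ [disjoint C1' & C3'] /\ [disjoint C2' & C3']) /\
    C1' :|: C2' :|: C3' = C1 :|: C2 :|: C3 /\
    [set C1'; C2'; C3'] != [set C1; C2; C3] /\
    (forall C' C, C' \in [set C1'; C2'; C3'] -> C \in [set C1; C2; C3] ->
       #|C' :&: C| = 1).
Proof.
move=> d12 d13 d23 unext.
have /and3P[/forall_inP cls _ _] := unext.
have [t1 t1L E1] : exists2 t, t \in lines & C1 = [set x in t].
  by apply/max_comm_class_line/cls; rewrite !inE eqxx.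
have [t2 t2L E2] : exists2 t, t \in lines & C2 = [set x in t].
  by apply/max_comm_class_line/cls; rewrite !inE eqxx orbT.
have [t3 t3L E3] : exists2 t, t \in lines & C3 = [set x in t].
  by apply/max_comm_class_line/cls; rewrite !inE eqxx orbT.
subst C1 C2 C3.
have bl : blocking (t1 ++ t2 ++ t3).
  by apply: (unextendible_blocking unext); rewrite cover3 !set_cat setUA.
have [s1 [s2 [s3 [[s1L s2L s3L] [e12 e13 e23] meet1]]]] :=
  regulus t1L t2L t3L d12 d13 d23 bl.
exists [set x in s1], [set x in s2], [set x in s3].
do ![split] => //; try exact: line_max_comm_class.
  exact: grid_cover d12 d13 d23 e12 e13 e23 (card_line t1L) (card_line t2L)
    (card_line t3L) (card_line s1L) (card_line s2L) (card_line s3L) meet1.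
exact: grid_neq (card_line s1L) meet1.
Qed.
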